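(* Let $S$ be simple random walk on $\mathbb{Z}$ started at $0$ and set $P^t(0,z)=P[S_{2t}=2z]$ for $t\ge1$, $z\ge0$. Then for every $m\ge0$ and every choice of distinct positive integers $t_0,\dots,t_m$, the $(m+1)\times(m+1)$ matrix $\big(P^{t_i}(0,j)\big)_{0\le i,j\le m}$ is non-singular. In particular, for any $r\ge m+1$, every $(m+1)\times(m+1)$ square submatrix of $\big(P^{t}(0,j)\big)_{1\le t\le r,\,0\le j\le m}$ is non-singular. *)

From mathcomp Require Import all_boot all_order all_algebra.
Set Implicit Arguments. Unset Strict Implicit. Unset Printing Implicit Defensive.
Import Order.TTheory GRing.Theory Num.Theory.
Local Open Scope ring_scope.

(* Simple random walk on Z started at 0: the n steps are i.i.d. uniform
   +1/-1; the sample space is {ffun 'I_n -> bool} with the uniform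
   probability (true = step +1, false = step -1). *)
Definition srw_pos (n : nat) (w : {ffun 'I_n -> bool}) : int :=
  \sum_(i < n) (if w i then 1 else -1).

Definition srw_prob (n : nat) (x : int) : rat :=
  (#|[set w : {ffun 'I_n -> bool} | srw_pos w == x]|)%:R / (2 ^ n)%:R.

Definition Pt (t z : nat) : rat := srw_prob (2 * t) (2 * z)%:Z.

From mathcomp Require Import all_boot all_order all_algebra.
From mathcomp Require Import zify.
Import GRing.Theory Num.Theory.
Local Open Scope ring_scope.

(* Since [Pt t j = 'C(2t, t+j) / 4^t], the ratio [Pt t j / Pt t 0] equals
   t(t-1)...(t-j+1) / ((t+1)...(t+j)); multiplied by (t+1)...(t+m) it becomes
   G_j(t), where G_j = [Pt_poly m j] has degree m and roots 0, ..., j-1 and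
   -(j+1), ..., -m.  So the matrix is an invertible diagonal matrix times
   (G_j(t_i))_{i,j}.  A kernel vector of the latter gives a combination of the
   G_j of degree at most m vanishing at the m+1 distinct points t_i, hence the
   zero polynomial; and the G_j are linearly independent because G_j vanishes
   at 0, ..., j-1 but not at j. *)

Lemma card_ffun_count (n k : nat) :
  #|[set w : {ffun 'I_n -> bool} | #|[set i | w i]| == k]| = 'C(n, k).
Proof.
pose g (w : {ffun 'I_n -> bool}) : {set 'I_n} := [set i | w i].
have g_bij : bijective g.
  exists (fun A : {set 'I_n} => [ffun i => i \in A] : {ffun 'I_n -> bool}).
    by move=> w; apply/ffunP => i; rewrite ffunE inE.
  by move=> A; apply/setP => i; rewrite inE ffunE.
have -> : [set w : {ffun 'I_n -> bool} | #|[set i | w i]| == k]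
          = g @^-1: [set A : {set 'I_n} | #|A| == k].
  by apply/setP => w; rewrite !inE.
by rewrite on_card_preimset ?card_draws ?card_ord //; apply: onW_bij.
Qed.

Lemma srw_posE n (w : {ffun 'I_n -> bool}) :
  srw_pos w = 2 * (#|[set i | w i]|)%:Z - n%:Z.
Proof.
have -> : srw_pos w = \sum_(i < n) ((if w i then 2 else 0) - 1).
  by apply: eq_bigr => i _; case: (w i).
rewrite sumrB sumr_const card_ord -big_mkcond /=.
rewrite (eq_bigl (mem [set i | w i])); last by move=> i /=; rewrite inE.
rewrite sumr_const; set k := #|_|; clearbody k; rewrite -mulr_natr mulrC; lia.
Qed.

Lemma Pt_binomial t j : Pt t j = 'C(2 * t, t + j)%:R / (2 ^ (2 * t))%:R.
Proof.
rewrite /Pt /srw_prob -card_ffun_count; congr (_%:R / _).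
by apply: eq_card => w; rewrite !inE srw_posE; apply/eqP/eqP; lia.
Qed.

Lemma Pt0_neq0 t : Pt t 0 != 0.
Proof.
by rewrite Pt_binomial mulf_neq0 ?invr_eq0 ?pnatr_eq0 -?lt0n ?expn_gt0 ?bin_gt0;
  lia.
Qed.

Section BinomialProducts.
Variable R : comPzRingType.

Lemma natr_mul_bin_left n k :
  (k.+1)%:R * 'C(n, k.+1)%:R = (n%:R - k%:R) * 'C(n, k)%:R :> R.
Proof.
have [kn | nk] := leqP k n; first by rewrite -natrB // -!natrM mul_bin_left.
by rewrite !bin_small ?mulr0 //; lia.
Qed.

Lemma natr_bin_add_prod n a j :
  'C(n, a + j)%:R * \prod_(0 <= k < j) (a + k.+1)%:R
  = 'C(n, a)%:R * \prod_(0 <= k < j) (n%:R - (a + k)%:R) :> R.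
Proof.
elim: j => [|j IHj]; first by rewrite !big_geq ?addn0.
rewrite !big_nat_recr //= !mulrA -IHj mulrAC.
rewrite addnS (mulrC 'C(n, _)%:R) natr_mul_bin_left.
by rewrite -mulrA mulrC.
Qed.

End BinomialProducts.

Section PolynomialEvaluationMatrix.
Variable F : idomainType.

Lemma triangular_poly_free n (p : 'I_n -> {poly F}) (y : 'I_n -> F) :
    (forall i j : 'I_n, (i < j)%N -> (p j).[y i] = 0) ->
    (forall j, (p j).[y j] != 0) ->
  forall c : 'I_n -> F, \sum_j c j *: p j = 0 -> forall j, c j = 0.
Proof.
move=> p_up p_diag c sum_eq0.
suff c_eq0 s : forall j : 'I_n, (j < s)%N -> c j = 0.
  by move=> j; apply: (c_eq0 n).
elim: s => [//|s IHs] j; rewrite ltnS leq_eqVlt => /orP [/eqP js|/IHs //].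
have := congr1 (horner^~ (y j)) sum_eq0.
rewrite horner0 horner_sum (bigD1 j) //= big1 ?addr0 => [|k k_neq_j].
  by rewrite hornerZ => /eqP; rewrite mulf_eq0 (negbTE (p_diag j)) orbF => /eqP.
rewrite hornerZ; have [k_lt_j | j_lt_k | /val_inj k_eq_j] := ltngtP k j.
- by rewrite IHs ?mul0r // -js.
- by rewrite p_up ?mulr0.
- by rewrite k_eq_j eqxx in k_neq_j.
Qed.

Lemma det_horner_mx_neq0 n (p : 'I_n -> {poly F}) (x : 'I_n -> F) :
    injective x -> (forall j, size (p j) <= n)%N ->
    (forall c : 'I_n -> F, \sum_j c j *: p j = 0 -> forall j, c j = 0) ->
  \det (\matrix_(i, j) (p j).[x i]) != 0.
Proof.
move=> x_inj p_size p_free; rewrite -det_tr; apply/det0P => -[v v_neq0 v_ker].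
pose q := \sum_j v 0 j *: p j.
have q_root i : root q (x i).
  apply/rootP; transitivity ((v *m (\matrix_(i, j) (p j).[x i])^T) 0 i).
    by rewrite horner_sum !mxE; apply: eq_bigr => j _; rewrite hornerZ !mxE.
  by rewrite v_ker mxE.
have q_size : (size q <= n)%N.
  apply: (big_ind (fun r : {poly F} => size r <= n)%N); rewrite ?size_poly0 //.
    by move=> r s r_n s_n; rewrite (leq_trans (size_polyD _ _)) // geq_max r_n.
  by move=> j _; rewrite (leq_trans (size_scale_leq _ _)).
have q_eq0 : q = 0.
  apply/eqP; apply: contraTT q_size => q_neq0; rewrite -ltnNge.
  have x_uniq : uniq (map x (enum 'I_n)) by rewrite map_inj_uniq ?enum_uniq.
  have x_roots : all (root q) (map x (enum 'I_n)).
    by apply/allP => _ /mapP [i _ ->].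
  have := max_poly_roots q_neq0 x_roots x_uniq.
  by rewrite size_map size_enum_ord.
by move/negP: v_neq0; apply; apply/eqP/rowP => j; rewrite mxE (p_free _ q_eq0).
Qed.

End PolynomialEvaluationMatrix.

Definition Pt_poly_root (j k : nat) : rat :=
  if (k < j)%N then k%:R else - (k.+1)%:R.

Definition Pt_poly (m j : nat) : {poly rat} :=
  \prod_(0 <= k < m) ('X - (Pt_poly_root j k)%:P).

Lemma size_Pt_poly m j : size (Pt_poly m j) = m.+1.
Proof. by rewrite size_prod_XsubC size_iota subn0. Qed.

Lemma horner_Pt_poly m j x : (j <= m)%N ->
  (Pt_poly m j).[x]
  = \prod_(0 <= k < j) (x - k%:R) * \prod_(j <= k < m) (x + (k.+1)%:R).
Proof.
move=> jm; rewrite horner_prod (big_cat_nat (leq0n j) jm) /=.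
congr (_ * _); apply: eq_big_nat => k /andP [jk kj];
  by rewrite hornerXsubC /Pt_poly_root ?kj // ltnNge jk opprK.
Qed.

Lemma Pt_poly_nat_root m j s : (s < j)%N -> (j <= m)%N ->
  (Pt_poly m j).[s%:R] = 0.
Proof.
move=> sj jm; rewrite horner_Pt_poly // (big_cat_nat (leq0n s) (ltnW sj)) /=.
by rewrite (big_ltn sj) subrr mul0r mulr0 mul0r.
Qed.

Lemma Pt_poly_nat_neq0 m j : (Pt_poly m j).[j%:R] != 0.
Proof.
rewrite horner_prod prodf_seq_neq0; apply/allP => k _ /=.
rewrite hornerXsubC /Pt_poly_root; case: ltnP => kj.
  by rewrite subr_eq0 eqr_nat neq_ltn kj orbT.
by rewrite opprK -natrD pnatr_eq0 addnS.
Qed.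

Lemma Pt_factor m t j : (j <= m)%N ->
  Pt t j * \prod_(0 <= k < m) (t + k.+1)%:R = Pt t 0 * (Pt_poly m j).[t%:R].
Proof.
move=> jm; rewrite horner_Pt_poly // !Pt_binomial addn0.
rewrite (big_cat_nat (leq0n j) jm) /= mulrAC mulrA natr_bin_add_prod.
have -> : \prod_(0 <= k < j) ((2 * t)%:R - (t + k)%:R) =
          \prod_(0 <= k < j) (t%:R - k%:R) :> rat.
  by apply: eq_bigr => k _; rewrite mul2n -addnn !natrD addrKA.
rewrite mulrAC [in RHS]mulrA [in RHS](mulrAC 'C(_, _)%:R); congr (_ * _).
by apply: eq_bigr => k _; rewrite natrD.
Qed.

Lemma det_Pt_neq0 m (t : 'I_m.+1 -> nat) : injective t ->
  \det (\matrix_(i, j) Pt (t i) j) != 0.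
Proof.
move=> t_inj; pose Q s : rat := \prod_(0 <= k < m) (s + k.+1)%:R.
have Q_neq0 s : Q s != 0.
  by rewrite prodf_seq_neq0; apply/allP => k _; rewrite pnatr_eq0 addnS.
have -> : \matrix_(i, j) Pt (t i) j
          = diag_mx (\row_i (Pt (t i) 0 / Q (t i)))
            *m \matrix_(i < m.+1, j < m.+1) (Pt_poly m j).[(t i)%:R].
  apply/matrixP => i j; rewrite mul_diag_mx !mxE mulrAC -Pt_factor.
    exact/esym/mulfK/Q_neq0.
  by rewrite -ltnS.
rewrite det_mulmx det_diag mulf_neq0 //.
  rewrite prodf_seq_neq0; apply/allP => i _.
  by rewrite mxE mulf_neq0 ?invr_eq0 ?Pt0_neq0.
apply: det_horner_mx_neq0.
- by move=> i k /eqP; rewrite eqr_nat => /eqP /t_inj.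
- by move=> j; rewrite size_Pt_poly.
apply: (@triangular_poly_free _ _ _ (fun s : 'I_m.+1 => s%:R)) => [s j sj|j].
  by rewrite Pt_poly_nat_root // -ltnS.
exact: Pt_poly_nat_neq0.
Qed.

Theorem lemma3p2 (m : nat) :
  (forall t : 'I_m.+1 -> nat, injective t -> (forall i, (0 < t i)%N) ->
     \det (\matrix_(i < m.+1, j < m.+1) Pt (t i) j) != 0)
  /\
  (forall (r : nat), (m.+1 <= r)%N ->
     forall f : 'I_m.+1 -> 'I_r, injective f ->
       \det (rowsub f (\matrix_(t < r, j < m.+1) Pt t.+1 j)) != 0).
Proof.
split=> [t t_inj _ | r _ f f_inj]; first exact: det_Pt_neq0.
have -> : rowsub f (\matrix_(t < r, j < m.+1) Pt t.+1 j)
          = \matrix_(i, j) Pt (f i).+1 j by apply/matrixP => i j; rewrite !mxE.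
by apply: det_Pt_neq0 => i k [/val_inj/f_inj].
Qed.
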